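(* Let $\mathcal{K}$ be a discrete index set and, for each $k\in\mathcal{K}$, let $\Theta_k\subseteq\mathbb{R}^{n_k}$. Let $\pi$ be a probability distribution on $\mathcal{X}=\bigcup_{k\in\mathcal{K}}(\{k\}\times\Theta_k)$ with density $\pi(\mathbf{x})=\pi(k)\pi_k(\boldsymbol\theta_k)$, where $\pi(k)$ is the marginal probability of $k$ and $\pi_k$ the conditional density. Let $\nu$ be a univariate reference distribution with density, and for each $k$ let $T_k:\mathbb{R}^{n_k}\to\mathbb{R}^{n_k}$ be a diffeomorphism with $T_k\sharp\pi_k=\otimes_{n_k}\nu$. Consider RJMCMC across-model proposals from $(k,\boldsymbol\theta_k)$ to $(k',\boldsymbol\theta'_{k'})$, $k'\sim j_k$, constructed as follows, where for $n_{k'}\ge n_k$ with $w_k=n_{k'}-n_k$, $\bar h_{k,k'}:\mathbb{R}^{n_k}\times\mathbb{R}^{w_k}\to\mathbb{R}^{n_{k'}}$ is a volume-preserving diffeomorphism with $\bar h_{k,k'}\sharp\otimes_{n_{k'}}\nu=\otimes_{n_{k'}}\nu$: if $n_{k'}\ge n_k$, set $\mathbf{z}_k=T_k(\boldsymbol\theta_k)$, draw $\mathbf{u}_k\sim\otimes_{w_k}\nu$, and set $\boldsymbol\theta'_{k'}=T_{k'}^{-1}(\bar h_{k,k'}(\mathbf{z}_k,\mathbf{u}_k))$; if $n_{k'}<n_k$, set $(\mathbf{z}_{k'},\mathbf{u}_{k'})=\bar h_{k',k}^{-1}(T_k(\boldsymbol\theta_k))$, discard $\mathbf{u}_{k'}$,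 and set $\boldsymbol\theta'_{k'}=T_{k'}^{-1}(\mathbf{z}_{k'})$. These are accepted with the standard RJMCMC acceptance probability $$\alpha(\mathbf{x},\mathbf{x}')=1\wedge\frac{\pi(\mathbf{x}')\,j_{k'}(k)\,g_{k',k}(\mathbf{u}_{k'})}{\pi(\mathbf{x})\,j_k(k')\,g_{k,k'}(\mathbf{u}_k)}\,\big|J_{h_{k,k'}}(\boldsymbol\theta_k,\mathbf{u}_k)\big|,$$ where $h_{k,k'}$ is the composite map $(\boldsymbol\theta_k,\mathbf{u}_k)\mapsto(\boldsymbol\theta'_{k'},\mathbf{u}_{k'})$ and $g_{k,k'}$, $g_{k',k}$ are the densities ($\otimes_{w}\nu$, or $1$ if the auxiliary vector is empty) of the auxiliary variables of the forward and reverse moves. If the model-jump distributions $\{j_k\}$ are chosen such that $$\pi(k')\,j_{k'}(k)=\pi(k)\,j_k(k')\quad\text{for all }k,k'\in\mathcal{K},$$ then the proposal is rejection-free, i.e. $\alpha(\mathbf{x},\mathbf{x}')=1$ for every proposed across-model move.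
   Context: For a map $T$ and distribution $\mu$, $T\sharp\mu$ denotes the pushforward. $\otimes_n\nu$ is the $n$-fold product distribution of $\nu$. $|J_f|$ is the absolute Jacobian determinant. $j_k(k')$ is the probability of proposing model $k'$ from model $k$; $\wedge$ denotes minimum. A diffeomorphism is volume-preserving if its absolute Jacobian determinant is identically $1$. *)

From HB Require Import structures.
From mathcomp Require Import all_boot all_order all_algebra.
From mathcomp Require Import all_classical all_reals all_analysis.
Set Implicit Arguments. Unset Strict Implicit. Unset Printing Implicit Defensive.
Import Order.TTheory GRing.Theory Num.Theory.
Import numFieldNormedType.Exports.
Local Open Scope ring_scope.

Section RJ.
Variable R : realType.

Definition castrow (m p : nat) (e : m = p) (v : 'rV[R]_m) : 'rV[R]_p :=
  castmx (erefl 1%N, e) v.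

(** density of the n-fold product distribution (x)_m nu; equals 1 when m = 0 *)
Definition prodnu (nu : R -> R) (m : nat) (v : 'rV[R]_m) : R :=
  \prod_(i < m) nu (v ord0 i).


Definition jacdet (m : nat) (f : 'rV[R]_m -> 'rV[R]_m) (x : 'rV[R]_m) : R :=
  \det ('J f x).

Definition diffeo (m : nat) (f g : 'rV[R]_m -> 'rV[R]_m) : Prop :=
  cancel f g /\ cancel g f /\
  (forall x, differentiable f x) /\ (forall x, differentiable g x) /\
  continuous (fun x => 'J f x) /\ continuous (fun x => 'J g x).

Definition volume_preserving (m : nat) (f : 'rV[R]_m -> 'rV[R]_m) : Prop :=
  forall x, `|jacdet f x| = 1.

(** For a diffeomorphism f, "f # p = q" at the level of (Lebesgue) densities:
    by the change-of-variables formula, p(x) = q(f x) |J_f(x)|. *)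
Definition pushforward_dens (m : nat) (f : 'rV[R]_m -> 'rV[R]_m)
  (p q : 'rV[R]_m -> R) : Prop :=
  forall x, p x = q (f x) * `|jacdet f x|.

Variable K : countType.
Variable n : K -> nat.

(** Composite map h_{k,k'} : (theta_k, u_k) |-> theta'_{k'} for n_k <= n_{k'}
    (here u_{k'} is empty).  hbar k k' : R^{n_k} x R^{w_k} -> R^{n_k'}, with
    R^{n_k} x R^{w_k} encoded as 'rV_(n k + (n k' - n k)). *)
Definition h_up
  (T Tinv : forall k, 'rV[R]_(n k) -> 'rV[R]_(n k))
  (hbar : forall k k', 'rV[R]_(n k + (n k' - n k)) -> 'rV[R]_(n k + (n k' - n k)))
  (k k' : K) (le : (n k <= n k')%N) (v : 'rV[R]_(n k + (n k' - n k))) : 'rV[R]_(n k') :=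
  Tinv k' (castrow (subnKC le) (hbar k k' (row_mx (T k (lsubmx v)) (rsubmx v)))).

(** Composite map h_{k,k'} : theta_k |-> (theta'_{k'}, u_{k'}) for n_{k'} <= n_k
    (here u_k is empty); hbarinv k' k is the inverse of hbar k' k. *)
Definition h_down
  (T Tinv : forall k, 'rV[R]_(n k) -> 'rV[R]_(n k))
  (hbarinv : forall k k', 'rV[R]_(n k + (n k' - n k)) -> 'rV[R]_(n k + (n k' - n k)))
  (k k' : K) (le : (n k' <= n k)%N) (th : 'rV[R]_(n k)) : 'rV[R]_(n k' + (n k - n k')) :=
  let w := hbarinv k' k (castrow (esym (subnKC le)) (T k th)) in
  row_mx (Tinv k' (lsubmx w)) (rsubmx w).

Definition alpha_up (nu : R -> R) (piK : K -> R) (pic : forall k, 'rV[R]_(n k) -> R)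
  (j : K -> K -> R)
  (T Tinv : forall k, 'rV[R]_(n k) -> 'rV[R]_(n k))
  (hbar : forall k k', 'rV[R]_(n k + (n k' - n k)) -> 'rV[R]_(n k + (n k' - n k)))
  (k k' : K) (le : (n k <= n k')%N) (th : 'rV[R]_(n k)) (u : 'rV[R]_(n k' - n k)) : R :=
  let th' := h_up T Tinv hbar le (row_mx th u) in
  Num.min 1
    ((piK k' * pic k' th') * j k' k * 1
      / ((piK k * pic k th) * j k k' * prodnu nu u)
      * `|jacdet (fun v => castrow (esym (subnKC le)) (h_up T Tinv hbar le v))
                 (row_mx th u)|).

Definition alpha_down (nu : R -> R) (piK : K -> R) (pic : forall k, 'rV[R]_(n k) -> R)
  (j : K -> K -> R)
  (T Tinv : forall k, 'rV[R]_(n k) -> 'rV[R]_(n k))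
  (hbarinv : forall k k', 'rV[R]_(n k + (n k' - n k)) -> 'rV[R]_(n k + (n k' - n k)))
  (k k' : K) (le : (n k' <= n k)%N) (th : 'rV[R]_(n k)) : R :=
  let o := h_down T Tinv hbarinv le th in
  Num.min 1
    ((piK k' * pic k' (lsubmx o)) * j k' k * prodnu nu (rsubmx o)
      / ((piK k * pic k th) * j k k' * 1)
      * `|jacdet (fun t => castrow (subnKC le) (h_down T Tinv hbarinv le t)) th|).

End RJ.
Arguments prodnu {R} nu {m} v.

From HB Require Import structures.
From mathcomp Require Import all_boot all_order all_algebra.
From mathcomp Require Import all_classical all_reals all_analysis.
From mathcomp Require Import ring.
Import Order.TTheory GRing.Theory Num.Theory.
Import numFieldNormedType.Exports.
Local Open Scope ring_scope.

(* Push everything through the transport maps.  Since [T_k # pi_k] is the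
   product of copies of [nu] and [hbar] is volume preserving with
   [hbar # nu^n = nu^n], the chain rule gives, for an up move,
   [pi_k'(theta') |J_h(theta, u)| = nu^n(z) nu^w(u) |J_T_k(theta)|
                                  = pi_k(theta) g(u)],
   and symmetrically for a down move.  What is left of the acceptance ratio is
   [pi(k') j_k'(k) / (pi(k) j_k(k'))], which is 1 by the balance condition. *)

Set Implicit Arguments. Unset Strict Implicit.

Section ChangeOfVariables.
Variable R : realType.
Implicit Types m p : nat.

Lemma jacobian_comp m p q (f : 'rV[R]_m -> 'rV[R]_p) (g : 'rV[R]_p -> 'rV[R]_q) x :
  differentiable f x -> differentiable g (f x) ->
  'J (g \o f) x = 'J f x *m 'J g (f x).
Proof.
move=> df dg; rewrite /jacobian diff_comp //.
by apply/row_matrixP => i; rewrite !rowE mulmxA !mul_rV_lin1.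
Qed.

Lemma lin1_mx_eq m p (f : 'rV[R]_m -> 'rV[R]_p) (M : 'M[R]_(m, p)) :
  (forall u, f u = u *m M) -> lin1_mx f = M.
Proof. by move=> fM; apply/matrixP => i j; rewrite mxE fM -rowE mxE. Qed.

Lemma jacobian_id m (x : 'rV[R]_m) : 'J id x = 1%:M.
Proof. by apply: lin1_mx_eq => u; rewrite diff_val mulmx1. Qed.

Lemma jacdet_comp m (f g : 'rV[R]_m -> 'rV[R]_m) x :
  differentiable f x -> differentiable g (f x) ->
  jacdet (g \o f) x = jacdet f x * jacdet g (f x).
Proof. by move=> df dg; rewrite /jacdet jacobian_comp // det_mulmx. Qed.

Lemma diffeo_jacdetK m (f g : 'rV[R]_m -> 'rV[R]_m) :
  diffeo f g -> forall y, jacdet g y * jacdet f (g y) = 1.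
Proof.
move=> [_ [gK [df [dg _]]]] y; rewrite -jacdet_comp //.
have -> : f \o g = id by apply/funext => z; exact: gK.
by rewrite /jacdet jacobian_id det1.
Qed.

Lemma castrow_id m (v : 'rV[R]_m) : castrow (erefl m) v = v.
Proof. exact: castmx_id. Qed.

Lemma jacdet_castrow_conj m p (e1 : m = p) (e2 : p = m)
    (A : 'rV[R]_p -> 'rV[R]_p) (B : 'rV[R]_m -> 'rV[R]_m) x :
  differentiable B x -> differentiable A (castrow e1 (B x)) ->
  jacdet (fun v => castrow e2 (A (castrow e1 (B v)))) x
    = jacdet B x * jacdet A (castrow e1 (B x)).
Proof.
case: p / e1 A e2 => A e2; rewrite (eq_irrelevance e2 (erefl m)) castrow_id.
by move=> dB dA; rewrite -jacdet_comp.
Qed.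

Section LeftBlockMap.
Variables a b : nat.

Definition row_embl (w : 'rV[R]_a) : 'rV[R]_(a + b) := row_mx w 0.
Definition row_embr (w : 'rV[R]_b) : 'rV[R]_(a + b) := row_mx 0 w.

Fact row_embl_linear : linear row_embl.
Proof. by move=> c u v; rewrite /row_embl scale_row_mx add_row_mx scaler0 addr0. Qed.
Fact row_embr_linear : linear row_embr.
Proof. by move=> c u v; rewrite /row_embr scale_row_mx add_row_mx scaler0 addr0. Qed.
HB.instance Definition _ := GRing.isLinear.Build _ _ _ _ _ row_embl_linear.
HB.instance Definition _ := GRing.isLinear.Build _ _ _ _ _ row_embr_linear.

Lemma continuous_row_embl : continuous row_embl.
Proof.
move=> u A /nbhs_ballP[e /= e0 eA]; apply/nbhs_ballP; exists e => //= v [_ uv].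
apply: eA; split => // i j; case: (split_ordP j) => j' ->.
  by rewrite !row_mxEl.
by rewrite !row_mxEr; exact: ballxx.
Qed.

Lemma continuous_row_embr : continuous row_embr.
Proof.
move=> u A /nbhs_ballP[e /= e0 eA]; apply/nbhs_ballP; exists e => //= v [_ uv].
apply: eA; split => // i j; case: (split_ordP j) => j' ->.
  by rewrite !row_mxEl; exact: ballxx.
by rewrite !row_mxEr.
Qed.

Lemma differentiable_row_embl w : differentiable row_embl w.
Proof. exact/linear_differentiable/continuous_row_embl. Qed.

Lemma differentiable_row_embr w : differentiable row_embr w.
Proof. exact/linear_differentiable/continuous_row_embr. Qed.

Variable f : 'rV[R]_a -> 'rV[R]_a.

Definition lblock_map (v : 'rV[R]_(a + b)) : 'rV[R]_(a + b) :=
  row_mx (f (lsubmx v)) (rsubmx v).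

Lemma lblock_mapE : lblock_map = (row_embl \o f \o lsubmx) + (row_embr \o rsubmx).
Proof.
apply/funext => v.
change (lblock_map v = row_embl (f (lsubmx v)) + row_embr (rsubmx v)).
by rewrite /row_embl /row_embr add_row_mx addr0 add0r.
Qed.

Variable v : 'rV[R]_(a + b).
Hypothesis df : differentiable f (lsubmx v).

Let dl : differentiable (row_embl \o f \o lsubmx) v.
Proof.
apply: differentiable_comp; first exact: differentiable_lsubmx.
by apply: differentiable_comp => //; exact: differentiable_row_embl.
Qed.

Let dr : differentiable (row_embr \o rsubmx) v.
Proof.
apply: differentiable_comp; first exact: differentiable_rsubmx.
exact: differentiable_row_embr.
Qed.

Lemma differentiable_lblock_map : differentiable lblock_map v.
Proof. by rewrite lblock_mapE; exact: differentiableD. Qed.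

Lemma jacobian_lblock_map : 'J lblock_map v = block_mx ('J f (lsubmx v)) 0 0 1%:M.
Proof.
have dlsub : differentiable (@lsubmx R 1 a b) v := differentiable_lsubmx v.
have drsub : differentiable (@rsubmx R 1 a b) v := differentiable_rsubmx v.
have dembl : differentiable (row_embl \o f) (lsubmx v).
  by apply: differentiable_comp => //; exact: differentiable_row_embl.
have dlE u : 'd (row_embl \o f \o lsubmx) v u = row_embl ('d f (lsubmx v) (lsubmx u)).
  rewrite (diff_comp dlsub dembl) /= (diff_comp df (differentiable_row_embl _)) /=.
  by rewrite !diff_lin //; [exact: continuous_lsubmx | exact: continuous_row_embl].
have drE u : 'd (row_embr \o rsubmx) v u = row_embr (rsubmx u).
  rewrite (diff_comp drsub (differentiable_row_embr _)) /=.
  by rewrite !diff_lin //; [exact: continuous_rsubmx | exact: continuous_row_embr].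
rewrite /jacobian lblock_mapE (diffD dl dr); apply: lin1_mx_eq => u /=.
rewrite -[u in RHS]hsubmxK mul_row_block !mulmx0 mulmx1 addr0 add0r.
transitivity (row_embl (lsubmx u *m 'J f (lsubmx v)) + row_embr (rsubmx u)).
  by congr (_ + _); [rewrite mul_rV_lin1; exact: dlE | exact: drE].
by rewrite /row_embl /row_embr add_row_mx addr0 add0r.
Qed.

Lemma jacdet_lblock_map : jacdet lblock_map v = jacdet f (lsubmx v).
Proof. by rewrite /jacdet jacobian_lblock_map det_ublock det1 mulr1. Qed.

End LeftBlockMap.

Implicit Types nu : R -> R.

Lemma prodnu_row_mx nu m p (x : 'rV[R]_m) (y : 'rV[R]_p) :
  prodnu nu (row_mx x y) = prodnu nu x * prodnu nu y.
Proof.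
rewrite /prodnu big_split_ord; congr (_ * _); apply: eq_bigr => i _.
  by rewrite row_mxEl.
by rewrite row_mxEr.
Qed.

Lemma prodnu_castrow nu m p (e : m = p) (v : 'rV[R]_m) :
  prodnu nu (castrow e v) = prodnu nu v.
Proof. by case: p / e; rewrite castrow_id. Qed.

Lemma pushforward_dens_inv m (f g : 'rV[R]_m -> 'rV[R]_m) (P Q : 'rV[R]_m -> R) :
  diffeo f g -> pushforward_dens f P Q -> forall y, P (g y) * `|jacdet g y| = Q y.
Proof.
move=> fg fPQ y; have [_ [gK _]] := fg.
rewrite fPQ gK -mulrA -normrM [jacdet f _ * _]mulrC (diffeo_jacdetK fg).
by rewrite normr1 mulr1.
Qed.

Lemma volume_preserving_pushforward m (f : 'rV[R]_m -> 'rV[R]_m) (P Q : 'rV[R]_m -> R) :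
  volume_preserving f -> pushforward_dens f P Q -> forall x, P x = Q (f x).
Proof. by move=> vf fPQ x; rewrite fPQ vf mulr1. Qed.

Lemma volume_preserving_inv m (f g : 'rV[R]_m -> 'rV[R]_m) :
  diffeo f g -> volume_preserving f -> volume_preserving g.
Proof.
move=> fg vf y; rewrite -[LHS]mulr1 -(vf (g y)) -normrM.
by rewrite (diffeo_jacdetK fg) normr1.
Qed.

Lemma min1_ratio_eq1 (x y J : R) : x != 0 -> y * J = x -> Num.min 1 (y / x * J) = 1.
Proof. by move=> x0 yJ; rewrite mulrAC yJ divff // minxx. Qed.

End ChangeOfVariables.

(* The model index [k] of [T k], [pic k], ... must stay an explicit argument. *)
Unset Implicit Arguments.

Section RejectionFree.
Context {R : realType} {K : countType} {n : K -> nat} {nu : R -> R}.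
Context {piK : K -> R} {pic : forall k, 'rV[R]_(n k) -> R} {j : K -> K -> R}.
Context {T Tinv : forall k, 'rV[R]_(n k) -> 'rV[R]_(n k)}.
Context {hbar hbarinv :
  forall k k', 'rV[R]_(n k + (n k' - n k)) -> 'rV[R]_(n k + (n k' - n k))}.
Hypothesis T_diffeo : forall k, diffeo (T k) (Tinv k).
Hypothesis T_push : forall k, pushforward_dens (T k) (pic k) (prodnu nu).
Hypothesis hbar_diffeo :
  forall k k', (n k <= n k')%N -> diffeo (hbar k k') (hbarinv k k').
Hypothesis hbar_vp : forall k k', (n k <= n k')%N -> volume_preserving (hbar k k').
Hypothesis hbar_push : forall k k', (n k <= n k')%N ->
  pushforward_dens (hbar k k') (prodnu nu) (prodnu nu).
Hypothesis balance : forall k k', piK k' * j k' k = piK k * j k k'.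

Lemma alpha_up_eq1 k k' (le : (n k <= n k')%N) th u :
  0 < piK k * pic k th -> 0 < j k k' -> 0 < prodnu nu u ->
  alpha_up nu piK pic j T Tinv hbar le th u = 1.
Proof.
move=> pi_gt0 j_gt0 u_gt0.
have [_ [_ [dT _]]] := T_diffeo k.
have [_ [_ [_ [dTinv' _]]]] := T_diffeo k'.
have [_ [_ [dhbar _]]] := hbar_diffeo _ _ le.
pose z := T k th; pose c := castrow (subnKC le) (hbar k k' (row_mx z u)).
have lblockE : lblock_map (T k) (row_mx th u) = row_mx z u.
  by rewrite /lblock_map row_mxKl row_mxKr.
have h_upE : h_up T Tinv hbar le (row_mx th u) = Tinv k' c.
  by rewrite /h_up row_mxKl row_mxKr.
have dG : differentiable (lblock_map (T k)) (row_mx th u).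
  by apply: differentiable_lblock_map; exact: dT.
have dB : differentiable (hbar k k' \o lblock_map (T k)) (row_mx th u).
  by apply: differentiable_comp => //; exact: dhbar.
have jacE : jacdet (fun v => castrow (esym (subnKC le)) (h_up T Tinv hbar le v))
      (row_mx th u)
    = jacdet (T k) th * jacdet (hbar k k') (row_mx z u) * jacdet (Tinv k') c.
  rewrite (jacdet_castrow_conj (e1 := subnKC le) (esym (subnKC le)) dB (dTinv' _)).
  rewrite (jacdet_comp dG (dhbar _)) (jacdet_lblock_map (dT _)) row_mxKl.
  by rewrite /comp lblockE.
have prodnu_c : prodnu nu c = prodnu nu z * prodnu nu u.
  rewrite prodnu_castrow -prodnu_row_mx.
  by rewrite -(volume_preserving_pushforward (hbar_vp _ _ le) (hbar_push _ _ le)).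
rewrite /alpha_up h_upE; apply: min1_ratio_eq1.
  by rewrite gt_eqF // mulr_gt0 // mulr_gt0.
rewrite jacE !normrM (hbar_vp _ _ le) mulr1 (T_push k th).
transitivity (piK k' * j k' k * (pic k' (Tinv k' c) * `|jacdet (Tinv k') c|)
    * `|jacdet (T k) th|); first by ring.
by rewrite balance (pushforward_dens_inv (T_diffeo k') (T_push k')) prodnu_c; ring.
Qed.

Lemma alpha_down_eq1 k k' (le : (n k' <= n k)%N) th :
  0 < piK k * pic k th -> 0 < j k k' ->
  alpha_down nu piK pic j T Tinv hbarinv le th = 1.
Proof.
move=> pi_gt0 j_gt0.
have [_ [_ [dT _]]] := T_diffeo k.
have [_ [_ [_ [dTinv' _]]]] := T_diffeo k'.
have [_ [hbarinvK [_ [dhbarinv _]]]] := hbar_diffeo _ _ le.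
pose z := T k th; pose c := castrow (esym (subnKC le)) z; pose w := hbarinv k' k c.
have h_downE : h_down T Tinv hbarinv le th = lblock_map (Tinv k') w by [].
have dA : differentiable (lblock_map (Tinv k') \o hbarinv k' k) c.
  apply: differentiable_comp => //.
  by apply: differentiable_lblock_map; exact: dTinv'.
have jacE : jacdet (fun t => castrow (subnKC le) (h_down T Tinv hbarinv le t)) th
    = jacdet (T k) th * (jacdet (hbarinv k' k) c * jacdet (Tinv k') (lsubmx w)).
  rewrite (jacdet_castrow_conj (e1 := esym (subnKC le)) (subnKC le) (dT th) dA).
  rewrite (jacdet_comp (dhbarinv _)); last first.
    by apply: differentiable_lblock_map; exact: dTinv'.
  by rewrite (jacdet_lblock_map (dTinv' _)).
have prodnu_w : prodnu nu (lsubmx w) * prodnu nu (rsubmx w) = prodnu nu z.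
  rewrite -prodnu_row_mx hsubmxK.
  rewrite (volume_preserving_pushforward (hbar_vp _ _ le) (hbar_push _ _ le)).
  by rewrite hbarinvK prodnu_castrow.
rewrite /alpha_down h_downE /lblock_map row_mxKl row_mxKr; apply: min1_ratio_eq1.
  by rewrite gt_eqF // mulr1 mulr_gt0.
rewrite jacE !normrM (volume_preserving_inv (hbar_diffeo _ _ le) (hbar_vp _ _ le)).
rewrite (T_push k th) mul1r.
transitivity (piK k' * j k' k
    * (pic k' (Tinv k' (lsubmx w)) * `|jacdet (Tinv k') (lsubmx w)|
       * prodnu nu (rsubmx w)) * `|jacdet (T k) th|); first by ring.
by rewrite balance (pushforward_dens_inv (T_diffeo k') (T_push k')) prodnu_w; ring.
Qed.

End RejectionFree.

Theorem corollary1 (R : realType) (K : countType) (n : K -> nat)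
  (nu : R -> R)
  (piK : K -> R) (pic : forall k, 'rV[R]_(n k) -> R)
  (j : K -> K -> R)
  (T Tinv : forall k, 'rV[R]_(n k) -> 'rV[R]_(n k))
  (hbar hbarinv : forall k k', 'rV[R]_(n k + (n k' - n k)) -> 'rV[R]_(n k + (n k' - n k)))
  (* nu : a univariate probability density *)
  (nu_ge0 : forall x, 0 <= nu x)
  (nu_meas : measurable_fun [set: R] nu)
  (nu_int1 : (\int[@lebesgue_measure R]_x (nu x)%:E = 1)%E)
  (* pi(k) : marginal probability mass on the discrete set K *)
  (piK_ge0 : forall k, 0 <= piK k)
  (piK_sum1 : (\esum_(k in [set: K]) (piK k)%:E = 1)%E)
  (* j_k : probability distribution on K for each k *)
  (j_ge0 : forall k k', 0 <= j k k')
  (j_sum1 : forall k, (\esum_(k' in [set: K]) (j k k')%:E = 1)%E)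
  (* T_k diffeomorphism with T_k # pi_k = (x)_{n_k} nu *)
  (T_diffeo : forall k, diffeo (T k) (Tinv k))
  (T_push : forall k, pushforward_dens (T k) (pic k) (prodnu nu))
  (* hbar_{k,k'} (n_k <= n_k') volume-preserving diffeomorphism with
     hbar # (x)_{n_k'} nu = (x)_{n_k'} nu *)
  (hbar_diffeo : forall k k', (n k <= n k')%N -> diffeo (hbar k k') (hbarinv k k'))
  (hbar_vp : forall k k', (n k <= n k')%N -> volume_preserving (hbar k k'))
  (hbar_push : forall k k', (n k <= n k')%N ->
     pushforward_dens (hbar k k') (prodnu nu) (prodnu nu))
  (* balance condition on the model-jump distributions *)
  (balance : forall k k', piK k' * j k' k = piK k * j k k') :
  (* every proposed across-model move is accepted with probability 1 *)
  (forall (k k' : K) (le : (n k <= n k')%N) (th : 'rV[R]_(n k)) (u : 'rV[R]_(n k' - n k)),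
     k' != k -> 0 < piK k * pic k th -> 0 < j k k' -> 0 < prodnu nu u ->
     alpha_up nu piK pic j T Tinv hbar le th u = 1)
  /\
  (forall (k k' : K) (lt : (n k' < n k)%N) (th : 'rV[R]_(n k)),
     k' != k -> 0 < piK k * pic k th -> 0 < j k k' ->
     alpha_down nu piK pic j T Tinv hbarinv (ltnW lt) th = 1).
Proof.
split => [k k' le th u _ | k k' lt th _].
  exact: (alpha_up_eq1 T_diffeo T_push hbar_diffeo hbar_vp hbar_push balance).
exact: (alpha_down_eq1 T_diffeo T_push hbar_diffeo hbar_vp hbar_push balance).
Qed.
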